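(* Let $\Gamma$ be a commutative Noetherian ring, $M$ a nonzero $\Gamma$-module and $i$ a nonlimit ordinal. The following assertions are equivalent: (1) $t_i(M)=M$ but $t_{i-1}(M)=0$; (2) both of the following hold: (a) for every $x\in M$ there are prime ideals $\mathbf p_1,\dots,\mathbf p_r$ of coheight exactly $i$ and integers $n_1,\dots,n_r>0$ such that $\mathbf p_1^{n_1}\cdots\mathbf p_r^{n_r}x=0$; (b) if $\mathbf p$ is a prime ideal of coheight $<i$ and $x\in M$ satisfies $\mathbf p x=0$, then $x=0$; (3) every prime ideal in $\operatorname{Ass}(M)$ has coheight exactly $i$.
   Context: Define subsets $Z_j\subseteq\operatorname{Spec}\Gamma$ for ordinals $j$: $Z_0=\operatorname{Specm}\Gamma$ (maximal ideals); for a limit ordinal $j>0$, $Z_j=\bigcup_{k<j}Z_k$; for a successor ordinal $j$, $Z_j=Z_{j-1}\cup\operatorname{Max}(\operatorname{Spec}\Gamma\setminus Z_{j-1})$, where $\operatorname{Max}$ denotes inclusion-maximal elements. The coheight $\operatorname{cht}(\mathbf p)$ of a prime $\mathbf p$ is the least ordinal $j$ with $\mathbf p\in Z_j$. Each $Z_j$ is closed under specialization; $\mathcal T_j$ is the class of $\Gamma$-modules $T$ with $\operatorname{Supp}(T)=\{\mathbf p: T_{\mathbf p}\ne 0\}\subseteq Z_j$, and $t_j(M)$ is the largest submodule of $M$ lying in $\mathcal T_j$. Convention: $Z_{-1}=\emptyset$ and $t_{-1}(M)=0$ (used when $i=0$). $\operatorname{Ass}(M)$ is the set of primes of the form $\operatorname{ann}_\Gamma(x)$,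 $x\in M$. *)

From HB Require Import structures.
From mathcomp Require Import all_boot all_order all_algebra.
From mathcomp Require Import boolp classical_sets.
Set Implicit Arguments. Unset Strict Implicit. Unset Printing Implicit Defensive.
Import GRing.Theory.
Local Open Scope ring_scope.
Local Open Scope classical_set_scope.

Section Ideals.
Variable R : comPzRingType.

Definition is_ideal (I : set R) : Prop :=
  [/\ I 0, (forall a b, I a -> I b -> I (a + b)) & (forall r a, I a -> I (r * a))].

Definition is_prime_ideal (p : set R) : Prop :=
  [/\ is_ideal p, ~ p 1 & forall a b, p (a * b) -> p a \/ p b].

Definition is_maximal_ideal (m : set R) : Prop :=
  [/\ is_ideal m, ~ m 1 &
      forall I, is_ideal I -> ~ I 1 -> m `<=` I -> I = m].

Definition noetherian : Prop :=
  forall I : nat -> set R, (forall n, is_ideal (I n)) ->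
    (forall n, I n `<=` I n.+1) -> exists N, forall n, (N <= n)%N -> I n = I N.

Definition Spec : set (set R) := is_prime_ideal.
Definition Specm : set (set R) := is_maximal_ideal.
Definition Maxel (S : set (set R)) : set (set R) :=
  [set p | S p /\ forall q, S q -> p `<=` q -> q = p].

Definition iprod (I J : set R) : set R :=
  [set x | exists (n : nat) (a b : 'I_n -> R),
             (forall k, I (a k) /\ J (b k)) /\ x = \sum_(k < n) a k * b k].

Fixpoint ipow (I : set R) (n : nat) : set R :=
  if n is n'.+1 then iprod I (ipow I n') else [set: R].

Definition iprod_pows (s : seq (set R * nat)) : set R :=
  foldr (fun pn acc => iprod (ipow pn.1 pn.2) acc) [set: R] s.

End Ideals.
Arguments Spec R : clear implicits.
Arguments Specm R : clear implicits.
Arguments noetherian R : clear implicits.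

(* Well-ordered index types (standing in for ordinals)                       *)
Record wordType := WOrd {
  wo_car :> Type;
  wo_lt : wo_car -> wo_car -> Prop;
  wo_wf : well_founded wo_lt;
  wo_trans : forall x y z, wo_lt x y -> wo_lt y z -> wo_lt x z;
  wo_total : forall x y, wo_lt x y \/ x = y \/ wo_lt y x }.

Section Ordinals.
Variable W : wordType.
Local Notation lt := (@wo_lt W).

Definition is_pred (k j : W) : Prop := lt k j /\ forall m, lt m j -> m = k \/ lt m k.

Definition is_zero (j : W) : Prop := forall k, ~ lt k j.

Definition nonlimit (j : W) : Prop := is_zero j \/ exists k, is_pred k j.

End Ordinals.

Section Coheight.
Variables (R : comPzRingType) (W : wordType).
Local Notation lt := (@wo_lt W).

Definition Zstep (j : W) (Zp : forall k, lt k j -> set (set R)) : set (set R) :=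
  match pselect (exists k, is_pred k j) with
  | left h =>            (* successor: Z_j = Z_{j-1} \cup Max(Spec \ Z_{j-1}) *)
      let k := proj1_sig (cid h) in
      let Zk := Zp k (proj1 (proj2_sig (cid h))) in
      Zk `|` Maxel (Spec R `\` Zk)
  | right _ =>
      match pselect (exists k, lt k j) with
      | left _ => [set p | exists k (h : lt k j), Zp k h p]   (* limit: union *)
      | right _ => Specm R                                     (* Z_0 = Specm *)
      end
  end.

Definition Z : W -> set (set R) := Fix (@wo_wf W) (fun _ => set (set R)) Zstep.

Definition cht_eq (j : W) (p : set R) : Prop := Z j p /\ forall k, lt k j -> ~ Z k p.
Definition cht_lt (j : W) (p : set R) : Prop := exists k, lt k j /\ Z k p.

End Coheight.
Arguments Z R {W} j.
Arguments cht_eq R {W} j p.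
Arguments cht_lt R {W} j p.

Section Modules.
Variables (R : comPzRingType) (M : lmodType R).

Definition is_submodule (N : set M) : Prop :=
  [/\ N 0, (forall x y, N x -> N y -> N (x + y)) & (forall r x, N x -> N (r *: x))].

(* N_p <> 0, written out: some x/1 in N_p is nonzero, i.e. some x in N is
   killed by no s outside p. *)
Definition Supp (N : set M) : set (set R) :=
  [set p | is_prime_ideal p /\ exists x, N x /\ forall s, ~ p s -> s *: x <> 0].

(* t_j(M): the largest submodule of M with support in Z_j
   (union of all such submodules) *)
Definition tors (W : wordType) (j : W) : set M :=
  \bigcup_(N in [set N | is_submodule N /\ Supp N `<=` Z R j]) N.

Definition ann (x : M) : set R := [set r | r *: x = 0].

Definition ideal_kills (I : set R) (x : M) : Prop := forall r, I r -> r *: x = 0.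

Definition Ass : set (set R) := [set p | is_prime_ideal p /\ exists x, ann x = p].

End Modules.
Arguments tors {R} M {W} j.
Arguments Ass {R} M.

(* All three conditions are statements about Ass(M).  Over a Noetherian ring
   every nonzero element x has a multiple t x whose annihilator is an
   associated prime containing ann x, and every prime of the support contains
   an associated prime; since the sets Z_j are closed under specialization,
   Supp(M) lies in Z_i iff Ass(M) does, and M has no nonzero element killed by
   a prime of coheight < i iff no associated prime has coheight < i.  For the
   torsion condition in (2), take x with ann x maximal among the elements not
   killed by a product of powers of coheight-i primes; an associated prime
   q = ann (t x) has coheight i, every g x with g in q has a strictly larger
   annihilator, and Noetherianity provides one product of prime powers that
   works for all of q x at once, so that q times it kills x. *)
From HB Require Import structures.
From mathcomp Require Import all_boot all_order all_algebra.
From mathcomp Require Import boolp classical_sets.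
Set Implicit Arguments. Unset Strict Implicit. Unset Printing Implicit Defensive.
Import GRing.Theory.
Local Open Scope ring_scope.
Local Open Scope classical_set_scope.

Section Filtration.
Variables (R : comPzRingType) (W : wordType).
Local Notation lt := (@wo_lt W).

Lemma wo_lt_irr (x : W) : ~ lt x x.
Proof. by elim: (@wo_wf W x) => y _ IH Hyy; exact: (IH y Hyy Hyy). Qed.

Lemma is_pred_uniq (k k' j : W) : is_pred k j -> is_pred k' j -> k' = k.
Proof.
move=> [hk Hk] [hk' Hk'].
case: (Hk k' hk') => // lt1; case: (Hk' k hk) => [->//|lt2].
by case: (wo_lt_irr (wo_trans lt1 lt2)).
Qed.

Lemma Z_unfold (j : W) : Z R j = @Zstep R W j (fun k _ => Z R k).
Proof.
rewrite /Z Fix_eq // => x f g Hfg; rewrite /Zstep.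
case: pselect => [h|_] /=; first by case: (cid h) => k hk /=; rewrite Hfg.
case: pselect => // _; apply: funext => p; apply: propext.
by split=> -[k [hk H]]; exists k, hk; rewrite ?Hfg // -Hfg.
Qed.

Lemma Z_zero (j : W) : is_zero j -> Z R j = Specm R.
Proof.
move=> hz; rewrite Z_unfold /Zstep.
case: pselect => [h|_]; first by have [k [hk _]] := h; case: (hz k).
by case: pselect => // h; have [k hk] := h; case: (hz k).
Qed.

Lemma Z_succ (k j : W) : is_pred k j -> Z R j = Z R k `|` Maxel (Spec R `\` Z R k).
Proof.
move=> hp; rewrite Z_unfold /Zstep.
case: pselect => [h|nh]; last by case: nh; exists k.
by case: (cid h) => k' hk' /=; rewrite (is_pred_uniq hp hk').
Qed.

Lemma Z_limit (j : W) : ~ (exists k, is_pred k j) -> (exists k, lt k j) ->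
  Z R j = [set p | exists k, lt k j /\ Z R k p].
Proof.
move=> nh hl; rewrite Z_unfold /Zstep.
case: pselect => [h|_]; first by case: nh.
case: pselect => [_|//]; apply: funext => p; apply: propext.
by split=> -[k [hk H]]; [exists k | exists k, hk].
Qed.

Lemma Z_mono (j k : W) : lt k j -> Z R k `<=` Z R j.
Proof.
elim/(well_founded_ind (@wo_wf W)): j k => j IH k hkj p Hp.
have [[m hm]|nh] := pselect (exists m, is_pred m j).
  rewrite (Z_succ hm); left; have [hmj Hm] := hm.
  by case: (Hm k hkj) => [<-//|hkm]; exact: (IH m hmj k hkm).
by rewrite (Z_limit nh); [exists k | exists k].
Qed.

Lemma Z_specialize (j : W) (p q : set R) :
  Z R j p -> is_prime_ideal q -> p `<=` q -> Z R j q.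
Proof.
elim/(well_founded_ind (@wo_wf W)): j p => j IH p Hp Hq Hpq.
have [[m hm]|nh] := pselect (exists m, is_pred m j).
  move: Hp; rewrite !(Z_succ hm) => -[Hp|Mp].
    by left; exact: (IH m hm.1 p).
  have [Zq|nZq] := pselect (Z R m q); first by left.
  by right; have [_ Hmax] := Mp; rewrite (Hmax q (conj Hq nZq) Hpq).
have [hl|nl] := pselect (exists k, lt k j).
  move: Hp; rewrite (Z_limit nh hl) => -[k [hk Zk]].
  by exists k; split => //; exact: (IH k hk p).
have hz : is_zero j by move=> k hk; apply: nl; exists k.
move: Hp; rewrite (Z_zero hz) => -[Ip np1 Hmax]; have [Iq nq1 _] := Hq.
by rewrite (Hmax q Iq nq1 Hpq).
Qed.

Lemma cht_lt_specialize (j : W) (p q : set R) :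
  cht_lt R j p -> is_prime_ideal q -> p `<=` q -> cht_lt R j q.
Proof.
by move=> [k [hk Zk]] Pq pq; exists k; split => //; exact: Z_specialize Zk Pq pq.
Qed.

Lemma cht_lt_pred (j i : W) (p : set R) : is_pred j i -> cht_lt R i p <-> Z R j p.
Proof.
move=> [hji Hj]; split; last by exists j.
by move=> [k [/Hj [->//|hkj] Zk]]; exact: Z_mono hkj _ Zk.
Qed.

End Filtration.

Section Noetherian.
Variable R : comPzRingType.
Hypothesis HN : noetherian R.

Lemma noetherian_maximal (T : Type) (P : T -> Prop) (F : T -> set R) :
  (forall t, P t -> is_ideal (F t)) -> (exists t, P t) ->
  exists t, P t /\ forall t', P t' -> F t `<=` F t' -> F t' = F t.
Proof.
move=> Fid [t0 Pt0]; apply: contrapT => Hno.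
have step (t : {t | P t}) : exists t' : {t | P t},
    F (sval t) `<=` F (sval t') /\ F (sval t') <> F (sval t).
  case: t => t Pt /=; apply: contrapT => Hn; apply: Hno; exists t; split => //.
  move=> t' Pt' Hs; apply: contrapT => Hne; apply: Hn; by exists (exist _ t' Pt').
have [g Hg] := choice step.
pose u n := iter n g (exist _ t0 Pt0).
have [N HNn] := @HN (fun n => F (sval (u n))) (fun n => Fid _ (svalP (u n)))
  (fun n => (Hg (u n)).1).
by have := HNn N.+1 (leqnSn N); exact: (Hg (u N)).2.
Qed.

Lemma noetherian_directed_ub (T : Type) (P : T -> Prop) (F : T -> set R) :
  (forall t, P t -> is_ideal (F t)) -> (exists t, P t) ->
  (forall s t, P s -> P t -> exists u, [/\ P u, F s `<=` F u & F t `<=` F u]) ->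
  exists u, P u /\ forall t, P t -> F t `<=` F u.
Proof.
move=> Fid hP Fdir; have [u [Pu Fmax]] := noetherian_maximal Fid hP.
exists u; split => // t Pt; have [w [Pw Fuw Ftw]] := Fdir u t Pu Pt.
by rewrite -(Fmax w Pw Fuw).
Qed.

End Noetherian.

Section Annihilators.
Variables (R : comPzRingType) (M : lmodType R).
Hypothesis HN : noetherian R.

Lemma ann_ideal (x : M) : is_ideal (ann x).
Proof.
split; rewrite /ann /=; first by rewrite scale0r.
  by move=> a b ha hb; rewrite scalerDl ha hb addr0.
by move=> r a ha; rewrite -scalerA ha scaler0.
Qed.

Lemma ann_scale (r : R) (y : M) : ann y `<=` ann (r *: y).
Proof. by move=> a; rewrite /ann /= scalerA mulrC -scalerA => ->; rewrite scaler0. Qed.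

Lemma Ass_neq0 (p : set R) : Ass M p -> exists x : M, x <> 0 /\ ann x = p.
Proof.
move=> [[_ np1 _] [x Ex]]; exists x; split => // x0.
by apply: np1; rewrite -Ex /ann /= x0 scaler0.
Qed.

(* A maximal annihilator among the multiples of x not killed by S is prime. *)
Lemma Ass_avoiding (S : set R) (x : M) : S 1 ->
  (forall a b, S a -> S b -> S (a * b)) -> (forall s, S s -> s *: x <> 0) ->
  exists t, Ass M (ann (t *: x)) /\ forall s, S s -> s *: (t *: x) <> 0.
Proof.
move=> S1 SM Sx.
have P1 : forall s, S s -> s *: (1 *: x) <> 0 by move=> s; rewrite scale1r; exact: Sx.
have [t0 [Pt0 Hmax]] := noetherian_maximal HN
  (P := fun t => forall s, S s -> s *: (t *: x) <> 0) (F := fun t => ann (t *: x))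
  (fun t _ => ann_ideal (t *: x)) (ex_intro _ 1 P1).
set y := t0 *: x in Pt0 Hmax *.
have Hmul c : (forall s, S s -> s *: (c *: y) <> 0) -> ann (c *: y) = ann y.
  by move=> Pc; move: Hmax => /(_ (c * t0)); rewrite -scalerA; apply => //;
    exact: ann_scale.
have Hout a : ~ ann y a -> forall s, S s -> s *: (a *: y) <> 0.
  move=> na s Ss E; apply: na; rewrite -(Hmul s).
    by rewrite /ann /= scalerA mulrC -scalerA.
  by move=> s' Ss'; rewrite scalerA; exact: Pt0 _ (SM _ _ Ss' Ss).
exists t0; split => //; split; last by exists y.
split; [exact: ann_ideal | exact: Pt0 1 S1 |].
move=> a b hab; have [ha|na] := pselect (ann y a); [by left | right].
by rewrite -(Hmul a (Hout a na)) /ann /= scalerA mulrC.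
Qed.

Lemma Ass_multiple (x : M) : x <> 0 -> exists t, t *: x <> 0 /\ Ass M (ann (t *: x)).
Proof.
move=> xn0; have [|||t [At Ht]] := @Ass_avoiding [set 1] x => //.
- by move=> a b -> ->; rewrite mulr1.
- by move=> s ->; rewrite scale1r.
- by exists t; split => //; rewrite -[t *: x]scale1r; exact: Ht.
Qed.

Lemma ann_Supp (N : set M) (y : M) : N y -> is_prime_ideal (ann y) -> Supp N (ann y).
Proof. by move=> Ny Py; split => //; exists y. Qed.

Lemma Supp_Ass (N : set M) (p : set R) :
  Supp N p -> exists q, Ass M q /\ q `<=` p.
Proof.
move=> [[_ np1 pprime] [x [_ Hx]]].
have [|||t [At Ht]] := @Ass_avoiding (~` p) x => //.
  by move=> a b na nb /pprime [].
exists (ann (t *: x)); split => // r hr; apply: contrapT => nr.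
exact: Ht r nr hr.
Qed.

End Annihilators.

Section IdealProducts.
Variables (R : comPzRingType) (M : lmodType R).

Lemma iprod_mono (A A' B B' : set R) : A `<=` A' -> B `<=` B' ->
  iprod A B `<=` iprod A' B'.
Proof.
move=> hA hB r [n [a [b [H ->]]]]; exists n, a, b; split => // k.
by have [] := H k; split; [apply: hA | apply: hB].
Qed.

Lemma iprod_mem (A B : set R) a b : A a -> B b -> iprod A B (a * b).
Proof.
by move=> ha hb; exists 1%N, (fun _ => a), (fun _ => b); rewrite big_ord1.
Qed.

Lemma iprod_subl (A B : set R) : is_ideal A -> iprod A B `<=` A.
Proof.
move=> [A0 AD AM] r [n [a [b [H ->]]]].
by apply: (big_ind A) => // k _; rewrite mulrC; apply: AM; have [] := H k.
Qed.

Lemma iprod_kills (A B : set R) (x : M) :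
  (forall a b, A a -> B b -> (a * b) *: x = 0) -> ideal_kills (iprod A B) x.
Proof.
move=> H r [n [a [b [Hab ->]]]].
by rewrite scaler_suml big1 // => k _; have [] := Hab k; exact: H.
Qed.

Lemma iprod_kills_r (A B : set R) (x : M) :
  ideal_kills B x -> ideal_kills (iprod A B) x.
Proof. by move=> HB; apply: iprod_kills => a b _ hb; rewrite -scalerA HB ?scaler0. Qed.

Lemma iprod_prime (A B p : set R) : is_prime_ideal p ->
  iprod A B `<=` p -> A `<=` p \/ B `<=` p.
Proof.
move=> [_ _ pp] H; apply: contrapT => /not_orP [/existsNP [a /not_implyP [ha na]]
  /existsNP [b /not_implyP [hb nb]]].
by case: (pp _ _ (H _ (iprod_mem ha hb))).
Qed.

Lemma ipow_prime (q p : set R) n : is_prime_ideal p -> (0 < n)%N ->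
  ipow q n `<=` p -> q `<=` p.
Proof.
move=> Pp; elim: n => // -[_ _ /iprod_prime [] // Hn|n IH _ /iprod_prime []] //.
  by have [_ np1 _] := Pp; case: np1; exact: Hn.
by move=> Hn; exact: IH.
Qed.

Lemma iprod_pows_prime (s : seq (set R * nat)) (p : set R) : is_prime_ideal p ->
  (forall pn, pn \in s -> (0 < pn.2)%N) -> iprod_pows s `<=` p ->
  exists2 pn, pn \in s & pn.1 `<=` p.
Proof.
move=> Pp; elim: s => [|pn s IH] Hpos /= H.
  by have [_ np1 _] := Pp; case: np1; exact: H.
have [Hn|Hn] := iprod_prime Pp H.
  exists pn; first by rewrite in_cons eqxx.
  by apply: ipow_prime Pp _ Hn; apply: Hpos; rewrite in_cons eqxx.
have [|pn' h1 h2] := IH _ Hn; first by move=> pn' h; apply: Hpos; rewrite in_cons h orbT.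
by exists pn'; rewrite // in_cons h1 orbT.
Qed.

Lemma iprod_pows_cat_subl (s t : seq (set R * nat)) :
  iprod_pows (s ++ t) `<=` iprod_pows s.
Proof. by elim: s => [|pn s IH] //=; exact: iprod_mono. Qed.

Lemma iprod_pows_cat_kills (s t : seq (set R * nat)) (y : M) :
  ideal_kills (iprod_pows t) y -> ideal_kills (iprod_pows (s ++ t)) y.
Proof. by elim: s => [|pn s IH] //= H; apply: iprod_kills_r; exact: IH. Qed.

End IdealProducts.

Section Torsion.
Variables (R : comPzRingType) (M : lmodType R) (W : wordType).
Hypothesis HN : noetherian R.

Lemma tors_eq_setT (j : W) : tors M j = [set: M] <-> Supp [set: M] `<=` Z R j.
Proof.
split=> [Ht p [Pp [x [_ Hx]]]|H].
  have : tors M j x by rewrite Ht.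
  by case=> N [_ SuppN] Nx; apply: SuppN; split => //; exists x.
by apply/seteqP; split => // x _; exists [set: M].
Qed.

Lemma Supp_sub_Z (j : W) :
  Supp [set: M] `<=` Z R j <-> (forall p, Ass M p -> Z R j p).
Proof.
split=> [H p [Pp [x Ex]]|H p Sp].
  by apply: H; rewrite -Ex; apply: ann_Supp => //; rewrite Ex.
have [q [Aq qp]] := Supp_Ass HN Sp.
by apply: Z_specialize (H q Aq) Sp.1 qp.
Qed.

Lemma tors_eq_set0 (j : W) :
  tors M j = [set 0] <-> (forall p, Ass M p -> ~ Z R j p).
Proof.
split=> [HT p Ap Zp|Hno].
  have [x [xn0 Ex]] := Ass_neq0 Ap; apply: xn0.
  have : tors M j x; last by rewrite HT.
  exists [set y | exists r, y = r *: x]; last by exists 1; rewrite scale1r.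
  split; first split.
  - by exists 0; rewrite scale0r.
  - by move=> y z [r ->] [r' ->]; exists (r + r'); rewrite scalerDl.
  - by move=> r y [r' ->]; exists (r * r'); rewrite scalerA.
  move=> q [Pq [y [[r ->] Hy]]]; apply: Z_specialize Zp Pq _ => t pt.
  apply: contrapT => nq; apply: (Hy t nq).
  by rewrite -Ex /ann /= in pt; rewrite scalerA mulrC -scalerA pt scaler0.
apply/seteqP; split=> x; last first.
  move=> ->; exists [set 0] => //; split.
    by split=> // [y z -> ->|r y ->]; rewrite ?addr0 ?scaler0.
  by move=> q [[_ nq1 _] [y [-> Hy]]]; case: (Hy 1 nq1); rewrite scaler0.
case=> N [[_ _ NZ] SuppN] Nx; apply: contrapT => xn0.
have [t [_ At]] := Ass_multiple HN xn0.
by apply: (Hno _ At); apply: SuppN; apply: ann_Supp At.1; exact: NZ.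
Qed.

Lemma pred_tors_eq_set0 (i : W) : nonlimit i ->
  (forall j, is_pred j i -> tors M j = [set 0]) <->
  (forall p, Ass M p -> ~ cht_lt R i p).
Proof.
move=> Hnl; split=> [H p Ap [k [hk Zk]]|H j hj].
  case: Hnl => [hz|[j hj]]; first exact: (hz k hk).
  have /(tors_eq_set0 j) Hj := H j hj.
  by apply: (Hj p Ap); apply/(cht_lt_pred _ hj); exists k.
by apply/tors_eq_set0 => p Ap /(cht_lt_pred _ hj); exact: H.
Qed.

Lemma lower_torsionfree_Ass (i : W) :
  (forall (p : set R) (x : M), is_prime_ideal p -> cht_lt R i p ->
     ideal_kills p x -> x = 0) <->
  (forall p, Ass M p -> ~ cht_lt R i p).
Proof.
split=> [H p Ap Cp|H p x Pp Cp px].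
  have [x [xn0 Ex]] := Ass_neq0 Ap; apply: xn0; apply: (H p) Ap.1 Cp _.
  by move=> r; rewrite -Ex.
apply: contrapT => xn0; have [t [_ At]] := Ass_multiple HN xn0.
apply: (H _ At); apply: cht_lt_specialize Cp At.1 _ => r pr.
by apply: ann_scale; exact: px.
Qed.

End Torsion.

Section CoheightConditions.
Variables (R : comPzRingType) (M : lmodType R) (W : wordType) (i : W).
Hypothesis HN : noetherian R.

Definition tors_exact : Prop :=
  tors M i = [set: M] /\ (forall j, is_pred j i -> tors M j = [set 0]).

Definition coheight_seq (s : seq (set R * nat)) : Prop :=
  forall pn, pn \in s -> is_prime_ideal pn.1 /\ cht_eq R i pn.1 /\ (0 < pn.2)%N.

Definition killed_by_coheight_pows (x : M) : Prop :=
  exists s, coheight_seq s /\ ideal_kills (iprod_pows s) x.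

Definition lower_coheight_torsionfree : Prop :=
  forall (p : set R) (x : M), is_prime_ideal p -> cht_lt R i p ->
    ideal_kills p x -> x = 0.

Definition Ass_coheight : Prop := forall p : set R, Ass M p -> cht_eq R i p.

Lemma Ass_coheightE : Ass_coheight <->
  (forall p, Ass M p -> Z R i p) /\ (forall p, Ass M p -> ~ cht_lt R i p).
Proof.
split=> [H|[HZ HL] p Ap].
  by split=> p /H [Zp Hp] // [k [hk Zk]]; exact: Hp k hk Zk.
by split=> [|k hk Zk]; [exact: HZ | apply: HL Ap _; exists k].
Qed.

Lemma killed_by_coheight_prime (q : set R) (x : M) :
  is_prime_ideal q -> cht_eq R i q ->
  (forall g, q g -> killed_by_coheight_pows (g *: x)) -> killed_by_coheight_pows x.
Proof.
move=> Pq Cq Hq.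
pose K s := [set g : R | ideal_kills (iprod_pows s) (g *: x)].
have K_ideal s : is_ideal (K s).
  split; rewrite /K /=; first by move=> r _; rewrite scale0r scaler0.
    by move=> g h hg hh r hr; rewrite scalerDl scalerDr hg // hh // addr0.
  by move=> r g hg r' hr'; rewrite -scalerA scalerA mulrC -scalerA hg // scaler0.
have [|s t cs ct|s0 [cs0 Ks0]] := noetherian_directed_ub HN (P := coheight_seq) (F := K)
  (fun s _ => K_ideal s).
- by exists [::].
- exists (s ++ t); split.
  + by move=> pn; rewrite mem_cat => /orP [/cs|/ct].
  + by move=> g Kg r /iprod_pows_cat_subl; exact: Kg.
  + by move=> g Kg r; apply: iprod_pows_cat_kills.
have qK : q `<=` K s0 by move=> g /Hq [sg [csg ksg]]; exact: Ks0 sg csg g ksg.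
exists ((q, 1%N) :: s0); split.
  by move=> pn; rewrite in_cons => /orP [/eqP -> //|]; exact: cs0.
apply: iprod_kills => c b hc hb.
have Kc : K s0 c by apply: iprod_subl (K_ideal s0) _ (iprod_mono qK (@subset_refl _ _) hc).
by rewrite mulrC -scalerA Kc.
Qed.

Lemma Ass_coheight_killed : Ass_coheight -> forall x, killed_by_coheight_pows x.
Proof.
move=> H3; apply: contrapT => /existsNP [x0 Hx0].
have [x [Px Hmax]] := noetherian_maximal HN
  (fun x (_ : ~ killed_by_coheight_pows x) => ann_ideal x) (ex_intro _ x0 Hx0).
have xn0 : x <> 0 by move=> x0'; apply: Px; exists [::]; split => // r _; rewrite x0' scaler0.
have [t [txn0 At]] := Ass_multiple HN xn0.
apply: Px; apply: (killed_by_coheight_prime At.1 (H3 _ At)) => g qg.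
apply: contrapT => /Hmax /(_ (ann_scale g (y := x))) Egx; apply: txn0.
have : ann (g *: x) t by rewrite /ann /= scalerA mulrC -scalerA qg.
by rewrite Egx.
Qed.

Lemma killed_Ass_Z : (forall x, killed_by_coheight_pows x) ->
  forall p, Ass M p -> Z R i p.
Proof.
move=> H2a p Ap; have [x [_ Ex]] := Ass_neq0 Ap.
have [s [cs ks]] := H2a x.
have sp : iprod_pows s `<=` p by move=> r /ks; rewrite -Ex.
have [pn hpn pnp] := iprod_pows_prime Ap.1 (fun pn h => (cs pn h).2.2) sp.
by have [_ [[Zpn _] _]] := cs pn hpn; exact: Z_specialize Zpn Ap.1 pnp.
Qed.

Lemma tors_exact_Ass : nonlimit i -> tors_exact <-> Ass_coheight.
Proof.
move=> Hnl; have := tors_eq_setT M i; have := Supp_sub_Z M HN i.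
have := pred_tors_eq_set0 M HN Hnl; have := Ass_coheightE.
rewrite /tors_exact; tauto.
Qed.

Lemma killed_torsionfree_Ass :
  (forall x, killed_by_coheight_pows x) /\ lower_coheight_torsionfree <->
  Ass_coheight.
Proof.
have Hlow := lower_torsionfree_Ass M HN i.
split=> [[H2a H2b]|H3]; first by apply/Ass_coheightE; split;
  [exact: killed_Ass_Z | exact/Hlow].
by split; [exact: Ass_coheight_killed | apply/Hlow; exact: (Ass_coheightE.1 H3).2].
Qed.

End CoheightConditions.

Theorem corollary2p6 (R : comPzRingType) (M : lmodType R)
    (W : wordType) (i : W) :
  noetherian R -> [set: M] <> [set 0] -> nonlimit i ->
  [/\ (* (1) <-> (2) *)
      (tors M i = [set: M] /\
       (forall j, is_pred j i -> tors M j = [set 0]))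
      <->
      ((forall x : M, exists s : seq (set R * nat),
          (forall pn, pn \in s -> is_prime_ideal pn.1 /\ cht_eq R i pn.1
                                  /\ (0 < pn.2)%N)
          /\ ideal_kills (iprod_pows s) x)
       /\
       (forall (p : set R) (x : M), is_prime_ideal p -> cht_lt R i p ->
          ideal_kills p x -> x = 0)),
    (* (2) <-> (3) *)
      ((forall x : M, exists s : seq (set R * nat),
          (forall pn, pn \in s -> is_prime_ideal pn.1 /\ cht_eq R i pn.1
                                  /\ (0 < pn.2)%N)
          /\ ideal_kills (iprod_pows s) x)
       /\
       (forall (p : set R) (x : M), is_prime_ideal p -> cht_lt R i p ->
          ideal_kills p x -> x = 0))
      <->
      (forall p : set R, Ass M p -> cht_eq R i p)
    & (* (1) <-> (3) *)
      (tors M i = [set: M] /\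
       (forall j, is_pred j i -> tors M j = [set 0]))
      <->
      (forall p : set R, Ass M p -> cht_eq R i p)].
Proof.
move=> HN _ Hnl.
have h13 := tors_exact_Ass M HN Hnl.
have h23 := killed_torsionfree_Ass M i HN.
split; [exact: iff_trans h13 (iff_sym h23) | exact: h23 | exact: h13].
Qed.
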